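(* Let $q>0$, $q\neq1$, $M\ge2$, and let $G_q=SO_q(N)$ ($N\ge3$) or $Sp_q(n)$ ($N=2n$, $n\ge2$) with braid matrix $\hat R$, and $\hat R_M$ the braid matrix of $SL_q(M)$. Then each of $\hat R_M\otimes\hat R$ and $\hat R_M^{-1}\otimes\hat R$ has at least two distinct positive and at least two distinct negative eigenvalues (namely $q^2,q^{-2},-1,\pm q^{2-N},\mp q^{-N}$ for $\hat R_M\otimes\hat R$ and $-q^2,-q^{-2},1,\mp q^{2-N},\pm q^{-N}$ for $\hat R_M^{-1}\otimes\hat R$, upper signs for $SO_q(N)$, lower for $Sp_q(n)$). Consequently, by Lemma 1, there is no $GL_q(M)\times G_q$-covariant $q$-deformed Weyl or Clifford algebra with generators $A^A,A^+_A$ ($A=(\alpha,a)$) built from $\hat{\mathsf R}=\hat R_M^{\pm1}\otimes\hat R$ in the manner of Lemma 1 that has the same Poincaré series as its classical counterpart.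
   Context: For $SO_q(N)$: $\hat R=q\mathcal P^s-q^{-1}\mathcal P^a+q^{1-N}\mathcal P^t$; for $Sp_q(n)$: $\hat R=q\mathcal P^{s'}-q^{-1}\mathcal P^{a'}-q^{1-N}\mathcal P^{t'}$ (orthogonal projectors summing to the identity); $\hat R_M=q\mathcal P^S_M-q^{-1}\mathcal P^A_M$; $(X_M\otimes Y)^{AB}_{CD}=(X_M)^{\alpha\beta}_{\gamma\delta}Y^{ab}_{cd}$, and products of these projectors are the spectral projectors of $\hat R_M^{\pm1}\otimes\hat R$. Lemma 1: given a braid matrix $\hat{\mathsf R}=\sum_\mu\lambda_\mu\mathsf P^\mu$ (distinct $\lambda_\mu$), an algebra with relations $\sum(\mathsf P^\mp)^{CD}_{AB}A^+_CA^+_D=0$, $\sum(\mathsf P^\mp)^{AB}_{CD}A^DA^C=0$, $A^AA^+_B=\delta^A_B\mathbf 1\pm\sum S^{AC}_{BD}A^+_CA^D$ ($S$ numerical, $\mathsf P^\pm$ = sums of spectral projectors with positive/negative eigenvalue; upper sign Weyl, lower Clifford) can have the classical Poincaré series only if $\hat{\mathsf R}$ has exactly one negative (Weyl) resp. exactly one positive (Clifford) eigenvalue. *)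

From HB Require Import structures.
From mathcomp Require Import all_boot all_order all_algebra.
Set Implicit Arguments. Unset Strict Implicit. Unset Printing Implicit Defensive.
Import Order.TTheory GRing.Theory Num.Theory.
Local Open Scope ring_scope.

(* Linear operators on the space R^I, I a finite index type, given by their
   matrix entries: (A v)_i = \sum_j A i j * v j. *)
Definition op (R : pzRingType) (I : finType) := I -> I -> R.

Section Ops.
Variables (R : realFieldType) (I : finType).

Definition opmul (A B : op R I) : op R I := fun i k => \sum_j A i j * B j k.
Definition opid : op R I := fun i j => (i == j)%:R.
Definition opzero : op R I := fun _ _ => 0.
Definition optrace (A : op R I) : R := \sum_i A i i.

Definition is_eigenvalue (A : op R I) (l : R) : Prop :=
  exists v : I -> R, (exists i, v i != 0) /\
    forall i, \sum_j A i j * v j = l * v i.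

Definition proj_family2 (P1 P2 : op R I) : Prop :=
  [/\ opmul P1 P1 = P1, opmul P2 P2 = P2,
      opmul P1 P2 = opzero, opmul P2 P1 = opzero &
      (fun i j => P1 i j + P2 i j) = opid].

Definition proj_family3 (P1 P2 P3 : op R I) : Prop :=
  [/\ opmul P1 P1 = P1, opmul P2 P2 = P2, opmul P3 P3 = P3,
      (opmul P1 P2 = opzero /\ opmul P2 P1 = opzero /\
       opmul P1 P3 = opzero /\ opmul P3 P1 = opzero /\
       opmul P2 P3 = opzero /\ opmul P3 P2 = opzero) &
      (fun i j => P1 i j + P2 i j + P3 i j) = opid].

Definition two_pos_eigenvalues (A : op R I) : Prop :=
  exists l1 l2, [/\ l1 != l2, 0 < l1, 0 < l2, is_eigenvalue A l1 & is_eigenvalue A l2].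
Definition two_neg_eigenvalues (A : op R I) : Prop :=
  exists l1 l2, [/\ l1 != l2, l1 < 0, l2 < 0, is_eigenvalue A l1 & is_eigenvalue A l2].

(* The spectral condition of Lemma 1 (necessary for the classical Poincare
   series): exactly one negative eigenvalue (Weyl), exactly one positive
   eigenvalue (Clifford). *)
Definition lemma1_weyl_condition (A : op R I) : Prop :=
  exists! l, l < 0 /\ is_eigenvalue A l.
Definition lemma1_clifford_condition (A : op R I) : Prop :=
  exists! l, 0 < l /\ is_eigenvalue A l.
End Ops.
Arguments opid {R I}.
Arguments opzero {R I}.

(* V (x) V for V of dimension N: indices (a,b) *)
Definition V2 (N : nat) : finType := ('I_N * 'I_N)%type.

(* Tensor product with the paper's index convention A = (alpha, a):
   (X (x) Y)^{AB}_{CD} = X^{alpha beta}_{gamma delta} Y^{ab}_{cd}. *)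
Definition tens (R : pzRingType) (M N : nat) (X : op R (V2 M)) (Y : op R (V2 N)) :
  op R (('I_M * 'I_N) * ('I_M * 'I_N))%type :=
  fun AB CD =>
    let: ((al, a), (be, b)) := AB in
    let: ((ga, c), (de, d)) := CD in
    X (al, be) (ga, de) * Y (a, b) (c, d).

Inductive qgroup := SOq | Spq.

Definition qsgn (R : pzRingType) (k : qgroup) : R :=
  if k is SOq then 1 else -1.

Definition dim_ok (k : qgroup) (N : nat) : Prop :=
  match k with
  | SOq => (3 <= N)%N
  | Spq => exists n, (2 <= n)%N /\ N = (2 * n)%N
  end.

(* ranks (= traces) of the projectors P^s, P^a, P^t (resp. P^s', P^a', P^t') *)
Definition rank_s (k : qgroup) (N : nat) : nat :=
  if k is SOq then ((N * N.+1) %/ 2).-1 else (N * N.+1) %/ 2.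
Definition rank_a (k : qgroup) (N : nat) : nat :=
  if k is SOq then (N * N.-1) %/ 2 else ((N * N.-1) %/ 2).-1.

From Stdlib Require Import FunctionalExtensionality.
From HB Require Import structures.
From mathcomp Require Import all_boot all_order all_algebra.
From mathcomp Require Import zify.
Import Order.TTheory GRing.Theory Num.Theory.
Local Open Scope ring_scope.
Set Implicit Arguments. Unset Strict Implicit. Unset Printing Implicit Defensive.

(* Both braid matrices are linear combinations of complete families of nonzero
   orthogonal projectors, nonzero since their traces are: R_M = q P^S - q^-1 P^A,
   its inverse q^-1 P^S - q P^A, and R = q P^s - q^-1 P^a + c P^t with
   c = ±q^(1-N).  Tensor products of two such families again form one, so the
   spectrum of R_M^{±1} (x) R is exactly the set of products of an eigenvalue of
   R_M^{±1} with one of R.  For R_M (x) R these are q^2, q^-2, -1, q c and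
   -q^-1 c; one of the last two is negative, and it differs from -1 because
   N <> 0 for SO_q(N) and N <> 2 for Sp_q(n).  The spectrum of R_M^-1 (x) R is
   the negative of that of R_M (x) R, and two eigenvalues of each sign contradict
   the condition of Lemma 1. *)

Section OperatorAlgebra.
Variables (R : realFieldType) (I : finType).
Implicit Types (A B C : op R I) (v : I -> R).

Definition opscale (a : R) A : op R I := fun i j => a * A i j.
Definition opsum (K : finType) (E : K -> op R I) : op R I :=
  fun i j => \sum_k E k i j.
Definition opapp A v : I -> R := fun i => \sum_j A i j * v j.

Lemma op_ext A B : (forall i j, A i j = B i j) -> A = B.
Proof.
by move=> eqAB; do 2![apply: functional_extensionality => ?]; apply: eqAB.
Qed.

Lemma opmulA A B C : opmul (opmul A B) C = opmul A (opmul B C).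
Proof.
apply: op_ext => i k; rewrite /opmul.
under eq_bigr do rewrite big_distrl; rewrite exchange_big.
by apply: eq_bigr => j _; rewrite big_distrr; apply: eq_bigr => l _ /=; rewrite mulrA.
Qed.

Lemma opmul1l A : opmul opid A = A.
Proof.
apply: op_ext => i k; rewrite /opmul /opid (bigD1 i) //= eqxx mul1r.
by rewrite big1 ?addr0 // => j /negPf; rewrite eq_sym => ->; rewrite mul0r.
Qed.

Lemma opmul1r A : opmul A opid = A.
Proof.
apply: op_ext => i k; rewrite /opmul /opid (bigD1 k) //= eqxx mulr1.
by rewrite big1 ?addr0 // => j /negPf ->; rewrite mulr0.
Qed.

Lemma opmul_suml (K : finType) (E : K -> op R I) B :
  opmul (opsum E) B = opsum (fun k => opmul (E k) B).
Proof.
apply: op_ext => i k; rewrite /opmul /opsum.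
by under eq_bigr do rewrite big_distrl; rewrite exchange_big.
Qed.

Lemma opmul_sumr (K : finType) A (E : K -> op R I) :
  opmul A (opsum E) = opsum (fun k => opmul A (E k)).
Proof.
apply: op_ext => i k; rewrite /opmul /opsum.
by under eq_bigr do rewrite big_distrr; rewrite exchange_big.
Qed.

Lemma opmulZl a A B : opmul (opscale a A) B = opscale a (opmul A B).
Proof.
apply: op_ext => i k; rewrite /opmul /opscale big_distrr /=.
by apply: eq_bigr => j _; rewrite mulrA.
Qed.

Lemma opmulZr a A B : opmul A (opscale a B) = opscale a (opmul A B).
Proof.
apply: op_ext => i k; rewrite /opmul /opscale big_distrr /=.
by apply: eq_bigr => j _; rewrite mulrCA.
Qed.

Lemma opappM A B v : opapp (opmul A B) v = opapp A (opapp B v).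
Proof.
apply: functional_extensionality => i; rewrite /opapp /opmul.
under eq_bigr do rewrite big_distrl; rewrite exchange_big.
by apply: eq_bigr => j _; rewrite big_distrr; apply: eq_bigr => l _ /=; rewrite mulrA.
Qed.

Lemma opapp1 v : opapp opid v = v.
Proof.
apply: functional_extensionality => i; rewrite /opapp /opid (bigD1 i) //= eqxx mul1r.
by rewrite big1 ?addr0 // => j /negPf; rewrite eq_sym => ->; rewrite mul0r.
Qed.

Lemma opapp_sum (K : finType) (E : K -> op R I) v i :
  opapp (opsum E) v i = \sum_k opapp (E k) v i.
Proof.
by rewrite /opapp /opsum; under eq_bigr do rewrite big_distrl; rewrite exchange_big.
Qed.

Lemma opappZ a A v i : opapp (opscale a A) v i = a * opapp A v i.
Proof.
by rewrite /opapp /opscale big_distrr /=; apply: eq_bigr => j _; rewrite mulrA.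
Qed.

End OperatorAlgebra.
Section SpectralDecomposition.
Variables (R : realFieldType) (I K : finType).
Implicit Types (A X : op R I) (t u : K -> R) (E : K -> op R I).

Definition projector_resolution E : Prop :=
  [/\ forall k l, opmul (E k) (E l) = if k == l then E k else opzero,
      opsum E = opid & forall k, exists i j, E k i j != 0].

Definition spectral_decomposition A t E : Prop :=
  projector_resolution E /\ A = opsum (fun k => opscale (t k) (E k)).

Lemma opsum_scale_delta t E k :
  opsum (fun l => opscale (t l) (if k == l then E l else opzero)) = opscale (t k) (E k).
Proof.
apply: op_ext => i j; rewrite /opsum /opscale (bigD1 k) //= eqxx big1 ?addr0 //.
by move=> l /negPf; rewrite eq_sym => ->; rewrite mulr0.
Qed.

Section Decomposition.
Variables (A : op R I) (t : K -> R) (E : K -> op R I).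
Hypothesis decA : spectral_decomposition A t E.

Lemma mul_spectral_projector k : opmul A (E k) = opscale (t k) (E k).
Proof.
case: decA => -[orthE _ _] ->; rewrite opmul_suml -(opsum_scale_delta t E k).
by congr opsum; apply: functional_extensionality => l; rewrite opmulZl orthE eq_sym.
Qed.

Lemma mul_projector_spectral k : opmul (E k) A = opscale (t k) (E k).
Proof.
case: decA => -[orthE _ _] ->; rewrite opmul_sumr -(opsum_scale_delta t E k).
congr opsum; apply: functional_extensionality => l.
by rewrite opmulZr orthE; case: eqP => // <-.
Qed.

(* Since [E k A = t k E k], applying [E k] to [A v = l v] gives
   [t k (E k v) = l (E k v)]; as the [E k] sum to the identity, some [E k v] is
   nonzero, hence [l = t k]. *)
Lemma eigenvalue_spectral l : is_eigenvalue A l <-> exists k, l = t k.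
Proof.
case: decA => -[_ sumE nzE] _; split; last first.
  move=> [k ->]; have [i [j Eij]] := nzE k.
  exists (fun i' => E k i' j); split; first by exists i.
  by move=> i'; have := congr1 (fun B => B i' j) (mul_spectral_projector k).
move=> [v [[i0 vi0] eigv]].
have {}eigv : opapp A v = fun i => l * v i by apply: functional_extensionality.
case: (boolP [exists k, l == t k]) => [/existsP[k /eqP ->]|]; first by exists k.
rewrite negb_exists => /forallP l_neq_t; case/negP: vi0; apply/eqP.
have Ev_eq0 k : opapp (E k) v = fun _ => 0.
  apply: functional_extensionality => i; apply/eqP.
  have : t k * opapp (E k) v i = l * opapp (E k) v i.
    rewrite -opappZ -mul_projector_spectral opappM eigv /opapp big_distrr /=.
    by apply: eq_bigr => j _; rewrite mulrCA.
  by move/eqP; rewrite -subr_eq0 -mulrBl mulf_eq0 subr_eq0 eq_sym (negPf (l_neq_t k)).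
by rewrite -(opapp1 v) -sumE opapp_sum big1 // => k _; rewrite Ev_eq0.
Qed.

Lemma spectral_decomposition_inv X u :
  (forall k, u k * t k = 1) -> opmul A X = opid -> spectral_decomposition X u E.
Proof.
move=> utK AX; split; first by case: decA.
set Y := opsum _; have YA : opmul Y A = opid.
  case: decA => -[_ sumE _] _; rewrite opmul_suml -sumE; congr opsum.
  apply: functional_extensionality => k; rewrite opmulZl mul_projector_spectral.
  by apply: op_ext => i j; rewrite /opscale mulrA utK mul1r.
by rewrite -[X]opmul1l -YA opmulA AX opmul1r.
Qed.
End Decomposition.
End SpectralDecomposition.

Section Tensor.
Variables (R : realFieldType) (M N : nat).
Implicit Types (A C : op R (V2 M)) (B D : op R (V2 N)).

Lemma tensE A B x y :
  tens A B x y = A (x.1.1, x.2.1) (y.1.1, y.2.1) * B (x.1.2, x.2.2) (y.1.2, y.2.2).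
Proof. by case: x => [[? ?] [? ?]]; case: y => [[? ?] [? ?]]. Qed.

Lemma sum_tens_index (f : V2 M -> R) (g : V2 N -> R) :
  \sum_(x : ('I_M * 'I_N) * ('I_M * 'I_N)) f (x.1.1, x.2.1) * g (x.1.2, x.2.2)
  = (\sum_y f y) * (\sum_z g z).
Proof.
pose h (p : V2 M * V2 N) := ((p.1.1, p.2.1), (p.1.2, p.2.2)).
pose h' (x : ('I_M * 'I_N) * ('I_M * 'I_N)) := ((x.1.1, x.2.1), (x.1.2, x.2.2)).
rewrite (reindex h); last by apply: onW_bij; exists h' => -[[? ?] [? ?]].
rewrite big_distrl /=; under [RHS]eq_bigr do rewrite big_distrr.
by rewrite pair_bigA; apply: eq_bigr => -[[? ?] [? ?]].
Qed.

Lemma tens_mul A B C D : opmul (tens A B) (tens C D) = tens (opmul A C) (opmul B D).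
Proof.
apply: op_ext => x z; rewrite /opmul tensE -sum_tens_index.
by apply: eq_bigr => y _; rewrite !tensE /= mulrACA.
Qed.

Lemma tens_opid : tens (@opid R (V2 M)) (@opid R (V2 N)) = opid.
Proof.
apply: op_ext => -[[a1 b1] [a2 b2]] [[c1 d1] [c2 d2]].
by rewrite /opid /= -natrM mulnb !xpair_eqE andbACA.
Qed.

Lemma tens0l B : tens (@opzero R (V2 M)) B = opzero.
Proof. by apply: op_ext => x y; rewrite tensE mul0r. Qed.

Lemma tens0r A : tens A (@opzero R (V2 N)) = opzero.
Proof. by apply: op_ext => x y; rewrite tensE mulr0. Qed.

Lemma tens_opscale a b A B :
  tens (opscale a A) (opscale b B) = opscale (a * b) (tens A B).
Proof. by apply: op_ext => x y; rewrite /opscale !tensE mulrACA. Qed.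

Lemma tens_opsum (K L : finType) (P : K -> op R (V2 M)) (Q : L -> op R (V2 N)) :
  tens (opsum P) (opsum Q) = opsum (fun kl => tens (P kl.1) (Q kl.2)).
Proof.
apply: op_ext => x y; rewrite /opsum tensE big_distrl /=.
under eq_bigr do rewrite big_distrr /=.
by rewrite pair_bigA; apply: eq_bigr => kl _; rewrite tensE.
Qed.

Lemma spectral_decomposition_tens (K L : finType) A B (a : K -> R) (b : L -> R)
    (P : K -> op R (V2 M)) (Q : L -> op R (V2 N)) :
  spectral_decomposition A a P -> spectral_decomposition B b Q ->
  spectral_decomposition (tens A B) (fun kl => a kl.1 * b kl.2)
                         (fun kl => tens (P kl.1) (Q kl.2)).
Proof.
move=> [[orthP sumP nzP] ->] [[orthQ sumQ nzQ] ->]; split; first split.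
- move=> [k l] [k' l']; rewrite tens_mul orthP orthQ xpair_eqE /=.
  by case: (k == k'); case: (l == l'); rewrite ?tens0l ?tens0r.
- by rewrite -tens_opsum sumP sumQ tens_opid.
- move=> [k l]; have [i [j Pij]] := nzP k; have [i' [j' Qij]] := nzQ l.
  exists ((i.1, i'.1), (i.2, i'.2)), ((j.1, j'.1), (j.2, j'.2)).
  by rewrite tensE /= -!surjective_pairing mulf_neq0.
- rewrite tens_opsum; congr opsum; apply: functional_extensionality => kl.
  exact: tens_opscale.
Qed.

End Tensor.

Section FiniteResolutions.
Variables (R : realFieldType) (I : finType).

Lemma op_neq0_of_trace (P : op R I) n :
  optrace P = n%:R -> (0 < n)%N -> exists i j, P i j != 0.
Proof.
move=> trP n_gt0; case: (pickP (fun i => P i i != 0)) => [i Pii|P0]; first by exists i, i.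
have : optrace P = 0 by rewrite /optrace big1 // => i _; apply/eqP/negbFE/P0.
by rewrite trP => /eqP; rewrite pnatr_eq0 => /eqP n0; rewrite n0 in n_gt0.
Qed.

Lemma spectral_decomposition2 (A P1 P2 : op R I) a1 a2 :
  proj_family2 P1 P2 -> (exists i j, P1 i j != 0) -> (exists i j, P2 i j != 0) ->
  (forall i j, A i j = a1 * P1 i j + a2 * P2 i j) ->
  spectral_decomposition A (tnth [tuple a1; a2]) (tnth [tuple P1; P2]).
Proof.
case=> P11 P22 P12 P21 sumP nz1 nz2 defA; split; first split.
- by case=> [[|[|//]] ?] [[|[|//]] ?].
- by rewrite -sumP; apply: op_ext => i j; rewrite /opsum !big_ord_recl big_ord0 addr0.
- by case=> [[|[|//]] ?].
- by apply: op_ext => i j; rewrite defA /opsum !big_ord_recl big_ord0 addr0.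
Qed.

Lemma spectral_decomposition3 (A P1 P2 P3 : op R I) a1 a2 a3 :
  proj_family3 P1 P2 P3 ->
  (exists i j, P1 i j != 0) -> (exists i j, P2 i j != 0) -> (exists i j, P3 i j != 0) ->
  (forall i j, A i j = a1 * P1 i j + a2 * P2 i j + a3 * P3 i j) ->
  spectral_decomposition A (tnth [tuple a1; a2; a3]) (tnth [tuple P1; P2; P3]).
Proof.
case=> P11 P22 P33 [P12 [P21 [P13 [P31 [P23 P32]]]]] sumP nz1 nz2 nz3 defA.
split; first split.
- by case=> [[|[|[|//]]] ?] [[|[|[|//]]] ?].
- rewrite -sumP; apply: op_ext => i j.
  by rewrite /opsum !big_ord_recl big_ord0 addr0 addrA.
- by case=> [[|[|[|//]]] ?].
- apply: op_ext => i j.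
  by rewrite defA /opsum !big_ord_recl big_ord0 addr0 addrA.
Qed.

End FiniteResolutions.

Lemma eigenvalue_tens_tuple (R : realFieldType) (M N m n : nat)
    (A : op R (V2 M)) (B : op R (V2 N)) (a : m.-tuple R) (b : n.-tuple R)
    (P : 'I_m -> op R (V2 M)) (Q : 'I_n -> op R (V2 N)) l :
  spectral_decomposition A (tnth a) P -> spectral_decomposition B (tnth b) Q ->
  is_eigenvalue (tens A B) l <-> l \in [seq x * y | x <- a, y <- b].
Proof.
move=> decA decB.
apply: iff_trans (eigenvalue_spectral (spectral_decomposition_tens decA decB) l) _.
split=> [[[k k'] ->]|/allpairsP[[x y] [/tnthP[k ->] /tnthP[k' ->] ->]]].
- by apply/allpairsP; exists (tnth a k, tnth b k'); rewrite !mem_tnth.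
- by exists (k, k').
Qed.

Section OppositeSpectrum.
Variables (R : realFieldType) (I : finType) (A B : op R I).
Hypothesis eigBA : forall l, is_eigenvalue B l <-> is_eigenvalue A (- l).

Lemma two_neg_eigenvalues_opp : two_pos_eigenvalues A -> two_neg_eigenvalues B.
Proof.
move=> [l1 [l2 [l12 l1_gt0 l2_gt0 eig1 eig2]]]; exists (- l1), (- l2).
by split; rewrite ?eqr_opp ?oppr_lt0 //; apply/eigBA; rewrite opprK.
Qed.

Lemma two_pos_eigenvalues_opp : two_neg_eigenvalues A -> two_pos_eigenvalues B.
Proof.
move=> [l1 [l2 [l12 l1_lt0 l2_lt0 eig1 eig2]]]; exists (- l1), (- l2).
by split; rewrite ?eqr_opp ?oppr_gt0 //; apply/eigBA; rewrite opprK.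
Qed.

End OppositeSpectrum.

Lemma two_neg_eigenvalues_not_weyl (R : realFieldType) (I : finType) (A : op R I) :
  two_neg_eigenvalues A -> ~ lemma1_weyl_condition A.
Proof.
move=> [l1 [l2 [l12 l1_lt0 l2_lt0 eig1 eig2]]] [l [_ uniq_l]].
by move: l12; rewrite -(uniq_l l1) // -(uniq_l l2) // eqxx.
Qed.

Lemma two_pos_eigenvalues_not_clifford (R : realFieldType) (I : finType) (A : op R I) :
  two_pos_eigenvalues A -> ~ lemma1_clifford_condition A.
Proof.
move=> [l1 [l2 [l12 l1_gt0 l2_gt0 eig1 eig2]]] [l [_ uniq_l]].
by move: l12; rewrite -(uniq_l l1) // -(uniq_l l2) // eqxx.
Qed.

Lemma rank_s_gt0 k N : dim_ok k N -> (0 < rank_s k N)%N.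
Proof. by case: k => /= [|[n [n_ge2 ->]]]; nia. Qed.

Lemma rank_a_gt0 k N : dim_ok k N -> (0 < rank_a k N)%N.
Proof. by case: k => /= [|[n [n_ge2 ->]]]; nia. Qed.

Section BraidEigenvalues.
Variables (R : realFieldType) (k : qgroup) (q : R) (N : nat).
Hypotheses (q_gt0 : 0 < q) (q_neq1 : q != 1).
Let s : R := qsgn R k.

Definition braid_tens_eigenvalues : seq R :=
  [:: q ^+ 2; q ^- 2; -1; s * q ^ (2 - N%:Z); - s * q ^ (- N%:Z)].
Definition braid_inv_tens_eigenvalues : seq R :=
  [:: - q ^+ 2; - q ^- 2; 1; - s * q ^ (2 - N%:Z); s * q ^ (- N%:Z)].

Let q_neq0 : q != 0 := lt0r_neq0 q_gt0.

Lemma braid_exprz_shift : q ^ (2 - N%:Z) = q * q ^ (1 - N%:Z) /\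
                          q ^ (- N%:Z) = q^-1 * q ^ (1 - N%:Z).
Proof.
split.
- by rewrite -[X in X * _]expr1z -expfzDr ?q_neq0 //; congr (_ ^ _); lia.
- by rewrite -exprN1 -expfzDr ?q_neq0 //; congr (_ ^ _); lia.
Qed.

Lemma braid_tens_eigenvaluesE :
  [seq x * y | x <- [:: q; - q^-1], y <- [:: q; - q^-1; s * q ^ (1 - N%:Z)]]
  =i braid_tens_eigenvalues.
Proof.
move=> l; rewrite /braid_tens_eigenvalues /=.
have [-> ->] := braid_exprz_shift; set c := q ^ (1 - N%:Z).
have qV : q * q^-1 = 1 by rewrite mulfV ?q_neq0.
have -> : q * q = q ^+ 2 by rewrite expr2.
have -> : q * - q^-1 = -1 by rewrite mulrN qV.
have -> : q * (s * c) = s * (q * c) by rewrite mulrCA.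
have -> : - q^-1 * q = -1 by rewrite mulNr mulrC qV.
have -> : - q^-1 * - q^-1 = q ^- 2 by rewrite mulrNN expr2 invfM.
have -> : - q^-1 * (s * c) = - s * (q^-1 * c) by rewrite mulNr mulNr mulrCA.
rewrite !inE.
by case: (l == -1); case: (l == q ^+ 2); case: (l == q ^- 2); rewrite /= ?orbT.
Qed.

Lemma braid_inv_tens_eigenvaluesE :
  [seq x * y | x <- [:: q^-1; - q], y <- [:: q; - q^-1; s * q ^ (1 - N%:Z)]]
  =i braid_inv_tens_eigenvalues.
Proof.
move=> l; rewrite /braid_inv_tens_eigenvalues /=.
have [-> ->] := braid_exprz_shift; set c := q ^ (1 - N%:Z).
have qV : q * q^-1 = 1 by rewrite mulfV ?q_neq0.
have -> : q^-1 * q = 1 by rewrite mulrC qV.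
have -> : q^-1 * - q^-1 = - q ^- 2 by rewrite mulrN expr2 invfM.
have -> : q^-1 * (s * c) = s * (q^-1 * c) by rewrite mulrCA.
have -> : - q * q = - q ^+ 2 by rewrite mulNr expr2.
have -> : - q * - q^-1 = 1 by rewrite mulrNN qV.
have -> : - q * (s * c) = - s * (q * c) by rewrite mulNr mulNr mulrCA.
rewrite !inE.
by case: (l == 1); case: (l == - q ^+ 2); case: (l == - q ^- 2); rewrite /= ?orbT // orbC.
Qed.

Lemma braid_inv_tens_eigenvalues_opp l :
  (l \in braid_inv_tens_eigenvalues) = (- l \in braid_tens_eigenvalues).
Proof. by rewrite !inE !mulNr !eqr_oppLR !opprK. Qed.

Lemma q2_neq_qV2 : q ^+ 2 != q ^- 2.
Proof.
apply/eqP => q2E; have : (q ^+ 2) ^+ 2 == 1.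
  by rewrite expr2 {1}q2E mulVf // expf_neq0 // q_neq0.
by rewrite !pexpr_eq1 // ?exprn_ge0 ?ltW // (negPf q_neq1).
Qed.

Section SpectrumSigns.
Variables (I : finType) (T : op R I).
Hypothesis eigT : forall l, is_eigenvalue T l <-> l \in braid_tens_eigenvalues.

Lemma braid_two_pos_eigenvalues : two_pos_eigenvalues T.
Proof.
exists (q ^+ 2), (q ^- 2); split; rewrite ?exprn_gt0 ?invr_gt0 ?exprn_gt0 //.
- exact: q2_neq_qV2.
- by apply/eigT; rewrite !inE eqxx.
- by apply/eigT; rewrite !inE eqxx orbT.
Qed.

Lemma braid_two_neg_eigenvalues : dim_ok k N -> two_neg_eigenvalues T.
Proof.
have qz_neq1 (z : int) : z != 0 -> q ^ z != 1.
  by move=> z_neq0; rewrite pexprz_eq1 ?ltW // negb_or z_neq0.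
have [Ek|Ek] : k = SOq \/ k = Spq by case: k; [left|right].
- rewrite Ek => /= N_ge3; have sE : s = 1 by rewrite /s Ek.
  exists (-1), (- s * q ^ (- N%:Z)); rewrite sE mulN1r; split.
  + by rewrite eqr_opp eq_sym qz_neq1 // oppr_eq0; lia.
  + by rewrite oppr_lt0.
  + by rewrite oppr_lt0 exprz_gt0.
  + by apply/eigT; rewrite !inE eqxx !orbT.
  + by apply/eigT; rewrite !inE sE mulN1r eqxx !orbT.
- rewrite Ek => -[n [n_ge2 N2n]]; have sE : s = -1 by rewrite /s Ek.
  exists (-1), (s * q ^ (2 - N%:Z)); rewrite sE mulN1r; split.
  + by rewrite eqr_opp eq_sym qz_neq1 // N2n; lia.
  + by rewrite oppr_lt0.
  + by rewrite oppr_lt0 exprz_gt0.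
  + by apply/eigT; rewrite !inE eqxx !orbT.
  + by apply/eigT; rewrite !inE sE mulN1r eqxx !orbT.
Qed.

End SpectrumSigns.

End BraidEigenvalues.

Lemma braid_spectral_decomposition (R : realFieldType) k (q : R) N
    (Ps Pa Pt Rh : op R (V2 N)) :
  dim_ok k N -> proj_family3 Ps Pa Pt ->
  optrace Ps = (rank_s k N)%:R -> optrace Pa = (rank_a k N)%:R -> optrace Pt = 1 ->
  Rh = (fun i j => q * Ps i j - q^-1 * Pa i j + qsgn R k * q ^ (1 - N%:Z) * Pt i j) ->
  spectral_decomposition Rh (tnth [tuple q; - q^-1; qsgn R k * q ^ (1 - N%:Z)])
                            (tnth [tuple Ps; Pa; Pt]).
Proof.
move=> dimN famG trs tra trt defRh.
apply: spectral_decomposition3 famG _ _ _ _ => [|||i j].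
- exact: op_neq0_of_trace trs (rank_s_gt0 dimN).
- exact: op_neq0_of_trace tra (rank_a_gt0 dimN).
- exact: op_neq0_of_trace 1%N trt _.
- by rewrite defRh mulNr.
Qed.

Lemma slq_spectral_decomposition (R : realFieldType) (q : R) M (PS PA RM : op R (V2 M)) :
  (2 <= M)%N -> proj_family2 PS PA ->
  optrace PS = ((M * M.+1) %/ 2)%:R -> optrace PA = ((M * M.-1) %/ 2)%:R ->
  RM = (fun i j => q * PS i j - q^-1 * PA i j) ->
  spectral_decomposition RM (tnth [tuple q; - q^-1]) (tnth [tuple PS; PA]).
Proof.
move=> M_ge2 famM trS trA defRM.
apply: spectral_decomposition2 famM _ _ _ => [||i j].
- by apply: op_neq0_of_trace trS _; nia.
- by apply: op_neq0_of_trace trA _; nia.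
- by rewrite defRM mulNr.
Qed.

Lemma slq_inv_spectral_decomposition (R : realFieldType) (q : R) M
    (PS PA RM RMinv : op R (V2 M)) :
  q != 0 -> spectral_decomposition RM (tnth [tuple q; - q^-1]) (tnth [tuple PS; PA]) ->
  opmul RM RMinv = opid ->
  spectral_decomposition RMinv (tnth [tuple q^-1; - q]) (tnth [tuple PS; PA]).
Proof.
move=> q_neq0 decM RMK.
apply: (spectral_decomposition_inv decM (u := tnth [tuple q^-1; - q])) RMK.
case=> [[|[|//]] ?] /=.
- by rewrite mulVf.
- by rewrite mulrNN mulfV.
Qed.

Theorem mainTheorem9 (R : realFieldType) (k : qgroup) (q : R) (M N : nat)
    (Ps Pa Pt : op R (V2 N)) (Rh : op R (V2 N))
    (PS PA : op R (V2 M)) (RM RMinv : op R (V2 M)) :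
    0 < q -> q != 1 -> (2 <= M)%N -> dim_ok k N ->
    (* braid matrix of G_q = SO_q(N) resp. Sp_q(n) *)
    proj_family3 Ps Pa Pt ->
    optrace Ps = (rank_s k N)%:R -> optrace Pa = (rank_a k N)%:R ->
    optrace Pt = 1 ->
    Rh = (fun i j => q * Ps i j - q^-1 * Pa i j
                     + qsgn R k * q ^ (1 - (N : int)) * Pt i j) ->
    (* braid matrix of SL_q(M) and its inverse *)
    proj_family2 PS PA ->
    optrace PS = ((M * M.+1) %/ 2)%:R -> optrace PA = ((M * M.-1) %/ 2)%:R ->
    RM = (fun i j => q * PS i j - q^-1 * PA i j) ->
    opmul RMinv RM = opid -> opmul RM RMinv = opid ->
    let Tp := tens RM Rh in
    let Tm := tens RMinv Rh in
    [/\ forall l, is_eigenvalue Tp l <->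
           l \in [:: q ^+ 2; q ^- 2; -1; qsgn R k * q ^ (2 - (N : int));
                     - qsgn R k * q ^ (- (N : int))],
        forall l, is_eigenvalue Tm l <->
           l \in [:: - q ^+ 2; - q ^- 2; 1; - qsgn R k * q ^ (2 - (N : int));
                     qsgn R k * q ^ (- (N : int))],
        two_pos_eigenvalues Tp /\ two_neg_eigenvalues Tp,
        two_pos_eigenvalues Tm /\ two_neg_eigenvalues Tm &
        [/\ ~ lemma1_weyl_condition Tp, ~ lemma1_clifford_condition Tp,
            ~ lemma1_weyl_condition Tm & ~ lemma1_clifford_condition Tm]].
Proof.
move=> q_gt0 q_neq1 M_ge2 dimN famG trs tra trt defRh famM trS trA defRM _ RMK Tp Tm.
have decG := braid_spectral_decomposition dimN famG trs tra trt defRh.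
have decM := slq_spectral_decomposition M_ge2 famM trS trA defRM.
have decMinv := slq_inv_spectral_decomposition (lt0r_neq0 q_gt0) decM RMK.
have eigTp l : is_eigenvalue Tp l <-> l \in braid_tens_eigenvalues k q N.
  apply: iff_trans (eigenvalue_tens_tuple l decM decG) _.
  by rewrite braid_tens_eigenvaluesE.
have eigTm l : is_eigenvalue Tm l <-> l \in braid_inv_tens_eigenvalues k q N.
  apply: iff_trans (eigenvalue_tens_tuple l decMinv decG) _.
  by rewrite braid_inv_tens_eigenvaluesE.
have eigTmTp l : is_eigenvalue Tm l <-> is_eigenvalue Tp (- l).
  by apply: iff_trans (eigTm l) _; rewrite braid_inv_tens_eigenvalues_opp; apply: iff_sym.
have posTp := braid_two_pos_eigenvalues q_gt0 q_neq1 eigTp.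
have negTp := braid_two_neg_eigenvalues q_gt0 q_neq1 eigTp dimN.
have posTm := two_pos_eigenvalues_opp eigTmTp negTp.
have negTm := two_neg_eigenvalues_opp eigTmTp posTp.
split=> //.
by split; apply: two_neg_eigenvalues_not_weyl || apply: two_pos_eigenvalues_not_clifford.
Qed.
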